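(* For $\lambda=(\lambda_1,\dots,\lambda_l)\in\mathscr{P}^n_C$ (with $l\ge1$), writing $x_\lambda=v(\lambda)t_{-\xi(\lambda)}$ with $v(\lambda)\in W$, $\xi(\lambda)\in Q^\vee$, we have $$v(\lambda)=v_{\lambda_l}\cdots v_{\lambda_2}v_{\lambda_1},\qquad \xi(\lambda)=\varepsilon_1+v_{\lambda_1}^{-1}\varepsilon_1+v_{\lambda_1}^{-1}v_{\lambda_2}^{-1}\varepsilon_1+\cdots+v_{\lambda_1}^{-1}\cdots v_{\lambda_{l-1}}^{-1}\varepsilon_1.$$
   Context: $W_{\mathrm{af}}$ is the affine Weyl group of type $C_n^{(1)}$ generated by $s_0,\dots,s_n$; $W=\langle s_1,\dots,s_n\rangle$ acts on $X^\vee=\bigoplus_{i=1}^n\mathbb{Z}\varepsilon_i$ by: $s_i$ ($1\le i\le n-1$) swaps $\varepsilon_i,\varepsilon_{i+1}$; $s_n$ negates $\varepsilon_n$. $Q^\vee=\bigoplus\mathbb{Z}\alpha_i^\vee$, $\alpha_i^\vee=\varepsilon_i-\varepsilon_{i+1}$ ($i<n$), $\alpha_n^\vee=\varepsilon_n$. $W_{\mathrm{af}}\cong W\ltimes Q^\vee$, elements $wt_\xi$ with $wt_\xi w^{-1}=t_{w\xi}$, and $s_0=s_\theta t_{-\varepsilon_1}$ where $s_\theta=s_1\cdots s_{n-1}s_ns_{n-1}\cdots s_1$. Define $\rho_i=s_{i-1}\cdots s_1s_0$ ($1\le i\le n$), $\rho_i=s_{2n-i+1}\cdots s_{n-1}s_ns_{n-1}\cdots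 s_1s_0$ ($n+1\le i\le 2n$); $v_i=s_i\cdots s_{n-1}s_ns_{n-1}\cdots s_1$ ($1\le i\le n$), $v_i=s_{2n-i}\cdots s_2s_1$ ($n+1\le i\le 2n-1$), $v_{2n}=1$. $\mathscr{P}^n_C$ is the set of partitions $\lambda=(\lambda_1\ge\dots\ge\lambda_l>0)$ with $\lambda_1\le 2n$ such that $\lambda_k<n\Rightarrow\lambda_k>\lambda_{k+1}$ (with $\lambda_{l+1}=0$), and $x_\lambda=\rho_{\lambda_l}\cdots\rho_{\lambda_1}$. *)

(* Model of the affine Weyl group of type C_n^(1) as W ⋉ Q^vee,
   with W realised as signed permutation matrices acting on X^vee = Z^n
   (column vectors; coordinate j : 'I_n corresponds to epsilon_{j+1}). *)
From mathcomp Require Import all_boot all_order all_algebra.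
Set Implicit Arguments. Unset Strict Implicit. Unset Printing Implicit Defensive.
Import Order.TTheory GRing.Theory Num.Theory.
Local Open Scope ring_scope.

Definition eps (n k : nat) : 'cV[int]_n := \col_(a < n) ((a.+1 == k)%N)%:R.

(* matrix of the simple reflection s_i of W, 1 <= i <= n, acting on X^vee:
   s_i (i<n) swaps eps_i, eps_{i+1}; s_n negates eps_n.
   Entry (a,b) is the coefficient of eps_{a+1} in s_i eps_{b+1}. *)
Definition smat (n i : nat) : 'M[int]_n :=
  \matrix_(a < n, b < n)
    (if (i < n)%N then
       (if a.+1 == i then ((b.+1 == i.+1)%N)%:R
        else if a.+1 == i.+1 then ((b.+1 == i)%N)%:R
        else ((a == b :> nat))%:R)
     else
       (if (a == b :> nat) then (if a.+1 == n then -1 else 1) else 0)).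

Definition wmat (n : nat) (w : seq nat) : 'M[int]_n :=
  foldr (fun i acc => smat n i *m acc) 1%:M w.

Definition stheta (n : nat) : 'M[int]_n :=
  wmat n (iota 1 n.-1 ++ [:: n] ++ rev (iota 1 n.-1)).

(* Elements of W_af = W ⋉ Q^vee: the pair (w, xi) stands for w t_xi.
   (Q^vee = Z^n in type C.) *)
Definition waf (n : nat) := ('M[int]_n * 'cV[int]_n)%type.

Definition waf_one (n : nat) : waf n := (1%:M, 0).

(* (w t_xi)(w' t_xi') = w w' t_{w'^{-1} xi + xi'}, using t_xi w' = w' t_{w'^{-1} xi} *)
Definition waf_mul (n : nat) (x y : waf n) : waf n :=
  (x.1 *m y.1, invmx y.1 *m x.2 + y.2).

Definition gen (n i : nat) : waf n :=
  if i == 0%N then (stheta n, - eps n 1) else (smat n i, 0).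

Definition wafword (n : nat) (w : seq nat) : waf n :=
  foldr (fun i acc => waf_mul (gen n i) acc) (waf_one n) w.

Definition rho_word (n i : nat) : seq nat :=
  if (i <= n)%N then rev (iota 0 i)
  else iota (2 * n - i + 1) (i - n - 1) ++ [:: n] ++ rev (iota 1 n.-1) ++ [:: 0%N].
     (* s_{2n-i+1} ... s_{n-1} s_n s_{n-1} ... s_1 s_0 *)

Definition rho (n i : nat) : waf n := wafword n (rho_word n i).

Definition v_word (n i : nat) : seq nat :=
  if (i <= n)%N then iota i (n - i) ++ [:: n] ++ rev (iota 1 n.-1)
                                      (* s_i ... s_{n-1} s_n s_{n-1} ... s_1 *)
  else rev (iota 1 (2 * n - i)).      (* s_{2n-i} ... s_1 ; empty for i = 2n *)

Definition vmat (n i : nat) : 'M[int]_n := wmat n (v_word n i).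

(* the set P^n_C, partitions given as the list [lambda_1; ...; lambda_l] *)
Definition is_PC (n : nat) (lam : seq nat) : bool :=
  [&& sorted geq lam, all (fun a => 0 < a)%N lam, all (fun a => a <= 2 * n)%N lam &
      [forall k : 'I_(size lam),
         (nth 0 lam k < n)%N ==> (nth 0 lam k.+1 < nth 0 lam k)%N]].

Definition x_lam (n : nat) (lam : seq nat) : waf n :=
  foldr (fun a acc => waf_mul (rho n a) acc) (waf_one n) (rev lam).

Definition v_lam (n : nat) (lam : seq nat) : 'M[int]_n :=
  foldr (fun a acc => vmat n a *m acc) 1%:M (rev lam).

Definition vinv_prod (n : nat) (s : seq nat) : 'M[int]_n :=
  foldr (fun a acc => invmx (vmat n a) *m acc) 1%:M s.

Definition xi_lam (n : nat) (lam : seq nat) : 'cV[int]_n :=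
  \sum_(k < size lam) vinv_prod n (take k lam) *m eps n 1.

From mathcomp Require Import all_boot all_order all_algebra all_fingroup zify.
Import GRing.Theory.
Local Open Scope ring_scope.

(* The word of rho_i is u s_0 = u s_theta t_{-eps_1} for a word u in s_1, ..., s_n,
   and u s_theta reduces, using only s_j^2 = 1, to the word of v_i; hence
   rho_i = v_i t_{-eps_1}.  In W ⋉ Q^vee one has
   (v t_{-eps_1}) (w t_{-xi}) = v w t_{-(xi + w^{-1} eps_1)},
   so multiplying out x_lambda = rho_{lambda_l} ... rho_{lambda_1} one factor at a
   time gives both formulas. *)

Lemma invmxM (R : comUnitRingType) m (A B : 'M[R]_m) :
  A \in unitmx -> B \in unitmx -> invmx (A *m B) = invmx B *m invmx A.
Proof.
move=> A_unit B_unit; have AB_unit : A *m B \in unitmx by rewrite unitmx_mul A_unit.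
have AB_inv : A *m B *m (invmx B *m invmx A) = 1%:M by rewrite mulmxA mulmxK // mulmxV.
by rewrite -[LHS]mulmx1 -AB_inv mulmxA mulVmx // mul1mx.
Qed.

Section SimpleReflections.

Variable n : nat.

Lemma smat_tperm i (i_gt0 : (0 < i)%N) (lt_in : (i < n)%N) :
  smat n i = perm_mx (tperm (Ordinal (leq_ltn_trans (leq_pred i) lt_in)) (Ordinal lt_in)).
Proof.
apply/matrixP => a b; rewrite /smat /perm_mx !mxE lt_in.
case: tpermP => [->|->|ne1 ne2] /=; rewrite -?(inj_eq val_inj) /=.
- have -> : (Nat.pred i).+1 = i by lia.
  by rewrite eqxx eqSS eq_sym.
- have -> : (i.+1 == i) = false by lia.
  by rewrite eqxx; congr (_%:R); apply/eqP/eqP; lia.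
- have -> : (a.+1 == i) = false by apply/eqP => e; apply: ne1; apply: val_inj => /=; lia.
  have -> : (a.+1 == i.+1) = false by apply/eqP => e; apply: ne2; apply: val_inj => /=; lia.
  by [].
Qed.

Lemma smat_diag : smat n n = diag_mx (\row_(a < n) (if a.+1 == n then -1 else 1)).
Proof.
apply/matrixP => a b; rewrite /smat !mxE ltnn -(inj_eq val_inj).
by case: (a == b :> nat); rewrite ?mulr1n ?mulr0n.
Qed.

Lemma smatK i : (0 < i <= n)%N -> smat n i *m smat n i = 1%:M.
Proof.
case/andP => i_gt0; rewrite leq_eqVlt => /orP[/eqP -> | lt_in].
  rewrite smat_diag mulmx_diag -diag_const_mx; congr diag_mx.
  by apply/matrixP => a b; rewrite !mxE; case: ifP; rewrite ?mulrNN mulr1.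
by rewrite smat_tperm // -perm_mxM tperm2 perm_mx1.
Qed.

Definition simple_word (w : seq nat) : bool := all (fun j => 0 < j <= n)%N w.

Lemma simple_word_iota a k : (0 < a)%N -> (a + k <= n.+1)%N -> simple_word (iota a k).
Proof.
by move=> a_gt0 ak_le; apply/allP => x; rewrite mem_iota => /andP[? ?]; apply/andP; split; lia.
Qed.

Lemma simple_word_neq0 w : simple_word w -> all (fun j => j != 0%N) w.
Proof. by apply: sub_all => x /andP[x_gt0 _]; rewrite -lt0n. Qed.

Lemma wmat_cat u w : wmat n (u ++ w) = wmat n u *m wmat n w.
Proof. by elim: u => [|x u IHu] /=; rewrite ?mul1mx // -/(wmat n (u ++ w)) IHu mulmxA. Qed.

Lemma wmat_seq1 i : wmat n [:: i] = smat n i.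
Proof. exact: mulmx1. Qed.

Lemma wmat_revK w : simple_word w -> wmat n (rev w) *m wmat n w = 1%:M.
Proof.
elim: w => [|x w IHw] /=; first by rewrite mul1mx.
case/andP => x_simple w_simple.
rewrite rev_cons -cats1 wmat_cat wmat_seq1 -/(wmat n w) -mulmxA.
by rewrite (mulmxA (smat n x)) smatK // mul1mx IHw.
Qed.

Lemma wmatK w : simple_word w -> wmat n w *m wmat n (rev w) = 1%:M.
Proof. by move=> w_simple; rewrite -{1}(revK w) wmat_revK // /simple_word all_rev. Qed.

Lemma wmat_revKl w (Y : 'M_n) : simple_word w -> wmat n (rev w) *m (wmat n w *m Y) = Y.
Proof. by move=> w_simple; rewrite mulmxA wmat_revK // mul1mx. Qed.

Lemma wmatKl w (Y : 'M_n) : simple_word w -> wmat n w *m (wmat n (rev w) *m Y) = Y.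
Proof. by move=> w_simple; rewrite mulmxA wmatK // mul1mx. Qed.

Lemma wmat_unit w : simple_word w -> wmat n w \in unitmx.
Proof. by move=> w_simple; case: (mulmx1_unit (wmatK _ w_simple)). Qed.

Lemma simple_word_v i : (0 < i <= 2 * n)%N -> simple_word (v_word n i).
Proof.
case/andP => i_gt0 i_le; rewrite /v_word; case: ifP => i_le_n.
  rewrite /simple_word !all_cat /= andbT -/(simple_word _) all_rev -!/(simple_word _).
  by rewrite !simple_word_iota //; lia.
by rewrite /simple_word all_rev -/(simple_word _) simple_word_iota //; lia.
Qed.

Lemma vmat_unit i : (0 < i <= 2 * n)%N -> vmat n i \in unitmx.
Proof. by move=> i_range; apply/wmat_unit/simple_word_v. Qed.

End SimpleReflections.

Section Rho.

Variable n : nat.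

Lemma wafword_rcons0 w : all (fun j => j != 0%N) w ->
  wafword n (rcons w 0%N) = (wmat n w *m stheta n, - eps n 1).
Proof.
elim: w => [|x w IHw] /=.
  by move=> _; rewrite /waf_mul /gen /waf_one /= mulmx1 mul1mx invmx1 mul1mx addr0.
case/andP => x_neq0 w_neq0; rewrite -/(wafword n (rcons w 0%N)) IHw //.
by rewrite /waf_mul /gen (negPf x_neq0) /= mulmx0 add0r mulmxA.
Qed.

Lemma wmat_stheta_le i : (0 < i <= n)%N ->
  wmat n (rev (iota 1 i.-1)) *m stheta n = vmat n i.
Proof.
case/andP => i_gt0 i_le_n.
rewrite /stheta {1}(_ : n.-1 = (i.-1 + (n - i))%N); last by lia.
rewrite iotaD !wmat_cat -!mulmxA wmat_revKl; last by apply: simple_word_iota; lia.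
by rewrite add1n prednK // mul1mx /vmat /v_word i_le_n !wmat_cat wmat_seq1.
Qed.

Lemma wmat_stheta_gt i : (n < i <= 2 * n)%N ->
  let k := (2 * n - i)%N in
  wmat n (iota k.+1 (n.-1 - k) ++ n :: rev (iota 1 n.-1)) *m stheta n = vmat n i.
Proof.
case/andP => n_lt_i i_le k.
have head_simple : simple_word n (iota 1 k) by apply: simple_word_iota; lia.
have tail_simple : simple_word n (iota k.+1 (n.-1 - k)) by apply: simple_word_iota; lia.
rewrite /stheta /vmat /v_word leqNgt n_lt_i /=.
rewrite (_ : iota 1 n.-1 = iota 1 k ++ iota k.+1 (n.-1 - k)); last first.
  by rewrite -iotaD; congr iota; lia.
(* With C := iota 1 k and A := iota k.+1 (n.-1 - k), the product is
   (A s_n A^r C^r) (C A s_n A^r C^r) = C^r. *)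
rewrite rev_cat -cat1s !wmat_cat wmat_seq1 -!mulmxA !wmat_revKl //.
by rewrite (mulmxA (smat n n)) smatK ?mul1mx ?wmatKl //; lia.
Qed.

Lemma rhoE i : (0 < i <= 2 * n)%N -> rho n i = (vmat n i, - eps n 1).
Proof.
case/andP => i_gt0 i_le; rewrite /rho /rho_word; case: ifP => i_le_n.
  have -> : rev (iota 0 i) = rcons (rev (iota 1 i.-1)) 0%N.
    by rewrite -[in iota 0 i](prednK i_gt0) /= rev_cons.
  rewrite wafword_rcons0 ?wmat_stheta_le ?i_gt0 //.
  apply: (@simple_word_neq0 n); rewrite /simple_word all_rev.
  by apply: simple_word_iota; lia.
have n_lt_i : (n < i)%N by rewrite ltnNge i_le_n.
set k := (2 * n - i)%N.
rewrite (_ : _ ++ _ = rcons (iota k.+1 (n.-1 - k) ++ n :: rev (iota 1 n.-1)) 0%N); last first.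
  by rewrite -cats1 -catA /k; congr (iota _ _ ++ _); lia.
rewrite wafword_rcons0 ?wmat_stheta_gt ?n_lt_i //.
rewrite all_cat /= all_rev.
have [/simple_word_neq0 -> /simple_word_neq0 ->] :
  simple_word n (iota k.+1 (n.-1 - k)) /\ simple_word n (iota 1 n.-1).
  by split; apply: simple_word_iota; lia.
by rewrite andbT; apply/eqP; lia.
Qed.

End Rho.

Section XLambda.

Variable n : nat.

Lemma x_lam_rcons lam a : x_lam n (rcons lam a) = waf_mul (rho n a) (x_lam n lam).
Proof. by rewrite /x_lam rev_rcons. Qed.

Lemma v_lam_rcons lam a : v_lam n (rcons lam a) = vmat n a *m v_lam n lam.
Proof. by rewrite /v_lam rev_rcons. Qed.

Lemma vinv_prod_rcons lam a :
  vinv_prod n (rcons lam a) = vinv_prod n lam *m invmx (vmat n a).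
Proof.
elim: lam => [|x lam IHlam] /=; first by rewrite /vinv_prod /= mul1mx mulmx1.
by rewrite /vinv_prod /= -/(vinv_prod n (rcons lam a)) IHlam mulmxA.
Qed.

Lemma xi_lam_rcons lam a :
  xi_lam n (rcons lam a) = xi_lam n lam + vinv_prod n lam *m eps n 1.
Proof.
rewrite /xi_lam size_rcons big_ord_recr /= -cats1 takel_cat // take_size.
by congr (_ + _); apply: eq_bigr => k _; rewrite takel_cat // ltnW.
Qed.

Definition rho_indices (lam : seq nat) : bool := all (fun a => 0 < a <= 2 * n)%N lam.

Lemma v_lam_unit lam : rho_indices lam -> v_lam n lam \in unitmx.
Proof.
elim/last_ind: lam => [|lam a IHlam]; first by rewrite /v_lam unitmx1.
rewrite /rho_indices all_rcons => /andP[a_range lam_range].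
by rewrite v_lam_rcons unitmx_mul vmat_unit // IHlam.
Qed.

Lemma invmx_v_lam lam : rho_indices lam -> invmx (v_lam n lam) = vinv_prod n lam.
Proof.
elim/last_ind: lam => [|lam a IHlam]; first by rewrite /v_lam invmx1.
rewrite /rho_indices all_rcons => /andP[a_range lam_range].
by rewrite v_lam_rcons invmxM ?vmat_unit ?v_lam_unit // IHlam // vinv_prod_rcons.
Qed.

Lemma x_lamE lam : rho_indices lam -> x_lam n lam = (v_lam n lam, - xi_lam n lam).
Proof.
elim/last_ind: lam => [|lam a IHlam].
  by rewrite /x_lam /v_lam /xi_lam big_ord0 oppr0.
rewrite /rho_indices all_rcons => /andP[a_range lam_range].
rewrite x_lam_rcons IHlam // rhoE // /waf_mul /= v_lam_rcons xi_lam_rcons.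
by rewrite invmx_v_lam // mulmxN opprD addrC.
Qed.

End XLambda.

Theorem proposition3p2 (n : nat) (lam : seq nat) :
  (1 <= n)%N -> is_PC n lam -> (1 <= size lam)%N ->
  x_lam n lam = (v_lam n lam, - xi_lam n lam).
Proof.
move=> _ /and4P[_ lam_pos lam_le _] _; apply: x_lamE.
by apply/allP => a a_in; rewrite (allP lam_pos a a_in) (allP lam_le a a_in).
Qed.
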